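(* Let $(M,d)$ be a complete pointed metric space and $f\in\mathrm{Lip}_0(M,M)$ such that $\mathrm{int}(R_{\widehat f})\neq\emptyset$. Then there is no $\mu\in\mathcal F(M)\setminus\mathrm{span}(\delta(M))$ such that the sequence $(\widehat f^n(\mu))_n$ converges in norm to an element of $\mathrm{span}(\delta(M))$. In particular, $\widehat f$ is injective.
   Context: A pointed metric space is a metric space with a distinguished point $0$. $\mathrm{Lip}_0(M,M)$ denotes the Lipschitz maps $f:M\to M$ with $f(0)=0$; $\mathrm{Lip}_0(M)$ the real-valued Lipschitz functions vanishing at $0$ normed by the Lipschitz constant. $\delta:M\to\mathrm{Lip}_0(M)^*$, $\delta(x)(\varphi)=\varphi(x)$; $\mathcal F(M)$ is the norm-closed linear span of $\delta(M)$. $\widehat f$ is the unique bounded linear operator on $\mathcal F(M)$ with $\widehat f(\delta(x))=\delta(f(x))$. For an operator $T$, $R_T=\{\mu:\liminf_{n}\|T^n\mu-\mu\|=0\}$. *)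

From mathcomp Require Import all_boot all_order all_algebra.
From mathcomp Require Import all_classical all_reals all_analysis.
Set Implicit Arguments. Unset Strict Implicit. Unset Printing Implicit Defensive.
Import Order.TTheory GRing.Theory Num.Theory.
Import numFieldNormedType.Exports.
Local Open Scope classical_set_scope.
Local Open Scope ring_scope.

(* Elements of Lip_0(M)^* are represented as
   functionals (M -> R) -> R; only their values on Lip_0(M) matter. *)
Section Free.
Variables (R : realType) (M : Type) (d : M -> M -> R) (x0 : M).

Definition is_metric : Prop :=
  [/\ (forall x y, 0 <= d x y), (forall x y, d x y = 0 <-> x = y),
      (forall x y, d x y = d y x) & (forall x y z, d x z <= d x y + d y z)].

Definition complete_metric : Prop :=
  forall u : nat -> M,
    (forall e, 0 < e -> exists N, forall m n, (N <= m)%N -> (N <= n)%N ->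
        d (u m) (u n) < e) ->
    exists x, (fun n => d (u n) x) @ \oo --> (0 : R).

Definition lipschitz_fun (phi : M -> R) : Prop :=
  exists L : R, forall x y, `|phi x - phi y| <= L * d x y.

Definition Lip0 (phi : M -> R) : Prop := phi x0 = 0 /\ lipschitz_fun phi.

Definition lip_ball (phi : M -> R) : Prop :=
  Lip0 phi /\ forall x y, `|phi x - phi y| <= d x y.

Definition functional := (M -> R) -> R.

Definition in_Lip0_dual (mu : functional) : Prop :=
  (forall (a : R) phi psi, Lip0 phi -> Lip0 psi ->
      mu (fun x => a * phi x + psi x) = a * mu phi + mu psi) /\
  exists C : R, forall phi, lip_ball phi -> `|mu phi| <= C.

Definition dnorm (mu : functional) : R := sup [set `|mu phi| | phi in lip_ball].

Definition fsub (mu nu : functional) : functional := fun phi => mu phi - nu phi.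

Definition delta (x : M) : functional := fun phi => phi x.

Definition in_span_delta (mu : functional) : Prop :=
  exists s : seq (R * M), forall phi, Lip0 phi ->
    mu phi = \sum_(p <- s) p.1 * phi p.2.

(* mu \in F(M) : norm closure of span(delta(M)) in Lip_0(M)^* *)
Definition in_free (mu : functional) : Prop :=
  in_Lip0_dual mu /\
  forall e, 0 < e -> exists nu, in_span_delta nu /\ dnorm (fsub mu nu) < e.

Definition Lip0_map (f : M -> M) : Prop :=
  f x0 = x0 /\ exists L : R, forall x y, d (f x) (f y) <= L * d x y.

(* \hat f : the bounded linear operator with \hat f (delta x) = delta (f x),
   i.e. the restriction to F(M) of the adjoint of phi |-> phi \o f. *)
Definition fhat (f : M -> M) (mu : functional) : functional :=
  fun phi => mu (phi \o f).

Definition return_set (T : functional -> functional) : set functional :=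
  [set mu | in_free mu /\
     limn_einf (fun n => (dnorm (fsub (iter n T mu) mu))%:E) = 0%E].

Definition nonempty_interior (A : set functional) : Prop :=
  exists mu0, in_free mu0 /\ exists r : R, 0 < r /\
    forall nu, in_free nu -> dnorm (fsub nu mu0) < r -> A nu.

End Free.

From mathcomp Require Import all_boot all_order all_algebra.
From mathcomp Require Import all_classical all_reals all_analysis.
From mathcomp Require Import ring lra.
Import Order.TTheory GRing.Theory Num.Theory.
Import numFieldNormedType.Exports.
Local Open Scope classical_set_scope.
Local Open Scope ring_scope.
Set Implicit Arguments. Unset Strict Implicit. Unset Printing Implicit Defensive.

(* Proposition 3.15.  Write T for \hat f, so that T^n mu = mu (. o f^n).
   Both assertions follow from one rigidity statement (orbit_vanishes_eq0):
   if the interior of R_T contains a ball B(mu0, r), then every w in F(M)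
   with ||T^n w|| -> 0 is zero.  Indeed, if T^n mu tends to a molecule nu,
   then nu is T-fixed and the orbit of mu - nu vanishes; if T mu = T nu, the
   orbit of mu - nu is eventually 0.

   Take a molecule gam = sum_i a_i delta(x_i) with
   ||gam - mu0|| < r/2.  For small t >= 0, gam + t w is recurrent, and since
   T^n w -> 0 the orbit T^n gam = sum_i a_i delta(f^n x_i) comes back close to
   gam + t w.  Testing on h o Phi, with Phi a 1-Lipschitz function of bounded
   range and h : R -> R 1-Lipschitz with h 0 = 0, and taking a cluster point
   of the points (Phi (f^n x_i))_i, we find reals p_i with
   sum_i a_i h(p_i) = gam (h o Phi) + t w (h o Phi) for all such h.
   Tent functions h read off the masses of sum_i a_i delta_(p_i); they
   would move linearly in t while taking only finitely many values (subset
   sums of the a_i), so w Phi = 0.  Truncation and rescaling give w = 0. *)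

Section DualNorm.
Context (R : realType) (M : Type) (d : M -> M -> R) (x0 : M).
Hypothesis Hm : is_metric d.

Definition lip_linear (rho : functional R M) := forall (a : R) phi psi,
  Lip0 d x0 phi -> Lip0 d x0 psi ->
  rho (fun x => a * phi x + psi x) = a * rho phi + rho psi.
Definition lip_bounded (rho : functional R M) :=
  exists C : R, forall psi, lip_ball d x0 psi -> `|rho psi| <= C.

Definition lipschitz_with (psi : M -> R) (c : R) :=
  forall x y, `|psi x - psi y| <= c * d x y.

Lemma dist_ge0 x y : 0 <= d x y. Proof. by case: Hm. Qed.

Lemma lip_ball0 : lip_ball d x0 (fun _ => 0).
Proof.
split; first by split=> //; exists 0 => x y; rewrite subrr normr0 mul0r.
by move=> x y; rewrite subrr normr0 dist_ge0.
Qed.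

Lemma Lip0_0 : Lip0 d x0 (fun _ => 0). Proof. by case: lip_ball0. Qed.

Lemma Lip0_lipschitz_with chi : Lip0 d x0 chi -> exists2 c, 0 < c & lipschitz_with chi c.
Proof.
move=> [_ [L HL]]; exists (`|L| + 1); first by rewrite ltr_wpDl.
move=> x y; rewrite (le_trans (HL x y)) // ler_wpM2r ?dist_ge0 //.
by rewrite (le_trans (ler_norm _)) // lerDl.
Qed.

Lemma lip_ball_scale chi c : Lip0 d x0 chi -> lipschitz_with chi c -> 0 < c ->
  lip_ball d x0 (fun x => c^-1 * chi x).
Proof.
move=> [chi0 _] Hc c0.
have Hball : forall x y, `|c^-1 * chi x - c^-1 * chi y| <= d x y.
  by move=> x y; rewrite -mulrBr normrM gtr0_norm ?invr_gt0 // ler_pdivrMl.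
split; last exact: Hball.
by split; [rewrite chi0 mulr0 | exists 1 => x y; rewrite mul1r].
Qed.

Lemma dnorm_ub rho psi : lip_bounded rho -> lip_ball d x0 psi ->
  `|rho psi| <= dnorm d x0 rho.
Proof.
move=> [C HC] Hp; apply: sup_upper_bound; last by exists psi.
split; first by exists `|rho psi|, psi.
by exists C => _ [phi Hphi <-]; exact: HC.
Qed.

Lemma dnorm_le rho c : (forall psi, lip_ball d x0 psi -> `|rho psi| <= c) ->
  dnorm d x0 rho <= c.
Proof.
move=> H; apply: ge_sup.
  by exists `|rho (fun _ => 0)|, (fun _ => 0) => //; exact: lip_ball0.
by move=> _ [phi Hphi <-]; exact: H.
Qed.

Lemma dnorm_ext rho rho' : (forall psi, lip_ball d x0 psi -> rho psi = rho' psi) ->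
  dnorm d x0 rho = dnorm d x0 rho'.
Proof.
move=> H; rewrite /dnorm; congr sup; apply/seteqP; split => _ [phi Hphi <-];
  by exists phi => //; rewrite H.
Qed.

Lemma dnorm_ge0 rho : lip_bounded rho -> 0 <= dnorm d x0 rho.
Proof. by move=> Hb; apply: le_trans (dnorm_ub Hb lip_ball0). Qed.

Lemma lip_linear0 rho : lip_linear rho -> rho (fun _ => 0) = 0.
Proof.
move=> H; have := H 1 _ _ Lip0_0 Lip0_0.
have -> : (fun x : M => 1 * 0 + 0) = (fun _ => 0 : R) by apply: funext => x; rewrite mul1r addr0.
by rewrite mul1r; lra.
Qed.

Lemma lip_linearZ rho a phi : lip_linear rho -> Lip0 d x0 phi ->
  rho (fun x => a * phi x) = a * rho phi.
Proof.
move=> H Hp; have := H a _ _ Hp Lip0_0; rewrite lip_linear0 // addr0 => <-.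
by congr rho; apply: funext => x; rewrite addr0.
Qed.

Lemma lip_bounded_scale rho C chi c : lip_linear rho ->
  (forall psi, lip_ball d x0 psi -> `|rho psi| <= C) ->
  Lip0 d x0 chi -> lipschitz_with chi c -> 0 < c -> `|rho chi| <= c * C.
Proof.
move=> Hl HC Hchi Hc c0; have := HC _ (lip_ball_scale Hchi Hc c0).
by rewrite lip_linearZ // normrM gtr0_norm ?invr_gt0 // ler_pdivrMl.
Qed.

Lemma lip_linear_ball_eq0 rho : lip_linear rho ->
  (forall psi, lip_ball d x0 psi -> rho psi = 0) -> forall psi, Lip0 d x0 psi -> rho psi = 0.
Proof.
move=> Hl H0 psi Hpsi; have [c c0 Hc] := Lip0_lipschitz_with Hpsi.
have := H0 _ (lip_ball_scale Hpsi Hc c0); rewrite lip_linearZ // => /eqP.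
by rewrite mulf_eq0 invr_eq0 gt_eqF //= => /eqP.
Qed.

Lemma span_linear nu : in_span_delta d x0 nu -> lip_linear nu.
Proof.
move=> [s Hs] a phi psi Hphi Hpsi.
have Hl : Lip0 d x0 (fun x => a * phi x + psi x).
  case: Hphi => p0 [L1 HL1]; case: Hpsi => q0 [L2 HL2].
  split; first by rewrite p0 q0 mulr0 addr0.
  exists (`|a| * L1 + L2) => x y.
  rewrite (_ : _ - _ = a * (phi x - phi y) + (psi x - psi y)); last by ring.
  rewrite (le_trans (ler_normD _ _)) // mulrDl lerD // normrM -mulrA ler_wpM2l //.
rewrite !Hs // mulr_sumr -big_split; apply: eq_bigr => p _ /=; ring.
Qed.

Lemma span_bounded nu : in_span_delta d x0 nu -> lip_bounded nu.
Proof.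
move=> [s Hs]; exists (\sum_(p <- s) `|p.1| * d p.2 x0) => psi [Hp Hp1].
rewrite Hs // (le_trans (ler_norm_sum _ _ _)) // ler_sum // => p _.
by rewrite normrM ler_wpM2l //; have := Hp1 p.2 x0; rewrite Hp.1 subr0.
Qed.

Lemma span_ord nu : in_span_delta d x0 nu ->
  exists N (a : 'I_N -> R) (xs : 'I_N -> M),
    forall psi, Lip0 d x0 psi -> nu psi = \sum_i a i * psi (xs i).
Proof.
move=> [s Hs]; exists (size s), (fun i => (nth (0, x0) s i).1), (fun i => (nth (0, x0) s i).2).
by move=> psi Hp; rewrite Hs // (big_nth (0, x0)) big_mkord.
Qed.

Lemma lip_bounded_comb mu nu c : lip_bounded mu -> lip_bounded nu ->
  lip_bounded (fun psi => mu psi + c * nu psi).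
Proof.
move=> [C1 H1] [C2 H2]; exists (C1 + `|c| * C2) => psi Hp.
by rewrite (le_trans (ler_normD _ _)) // lerD // ?H1 // normrM ler_wpM2l // H2.
Qed.

Lemma lip_linear_comb mu nu c : lip_linear mu -> lip_linear nu ->
  lip_linear (fun psi => mu psi + c * nu psi).
Proof. by move=> H1 H2 a phi psi Hp Hq; rewrite H1 // H2 //; ring. Qed.

Lemma fsubE (mu nu : functional R M) : fsub mu nu = (fun psi => mu psi + (-1) * nu psi).
Proof. by apply: funext => psi; rewrite /fsub mulN1r. Qed.

Lemma lip_bounded_sub mu nu : lip_bounded mu -> lip_bounded nu -> lip_bounded (fsub mu nu).
Proof. by rewrite fsubE; exact: lip_bounded_comb. Qed.

Lemma lip_linear_sub mu nu : lip_linear mu -> lip_linear nu -> lip_linear (fsub mu nu).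
Proof. by rewrite fsubE; exact: lip_linear_comb. Qed.

Lemma free_comb mu nu c : in_free d x0 mu -> in_free d x0 nu ->
  in_free d x0 (fun psi => mu psi + c * nu psi).
Proof.
move=> [[l1 b1] Hmu] [[l2 b2] Hnu].
split; first by split; [exact: lip_linear_comb | exact: lip_bounded_comb].
move=> e e0.
have e1 : 0 < e / 2 by lra.
have e2 : 0 < e / 2 / (`|c| + 1) by rewrite divr_gt0 // ltr_wpDl.
have [mu' [[s1 H1] Hd1]] := Hmu _ e1.
have [nu' [[s2 H2] Hd2]] := Hnu _ e2.
exists (fun psi => mu' psi + c * nu' psi); split.
  exists (s1 ++ [seq (c * p.1, p.2) | p <- s2]) => phi Hphi.
  rewrite H1 // H2 // big_cat /= big_map mulr_sumr; congr (_ + _).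
  by apply: eq_bigr => p _; rewrite mulrA.
have bb1 : lip_bounded (fsub mu mu') by apply: lip_bounded_sub => //; apply: span_bounded; exists s1.
have bb2 : lip_bounded (fsub nu nu') by apply: lip_bounded_sub => //; apply: span_bounded; exists s2.
apply: (le_lt_trans (y := dnorm d x0 (fsub mu mu') + `|c| * dnorm d x0 (fsub nu nu'))).
  apply: dnorm_le => psi Hp.
  rewrite /fsub (_ : _ - _ = (mu psi - mu' psi) + c * (nu psi - nu' psi)); last by ring.
  rewrite (le_trans (ler_normD _ _)) // lerD // ?(dnorm_ub bb1 Hp) //.
  by rewrite normrM ler_wpM2l // (dnorm_ub bb2 Hp).
have : `|c| * dnorm d x0 (fsub nu nu') <= `|c| * (e / 2 / (`|c| + 1)).
  by rewrite ler_wpM2l // ltW.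
have : `|c| * (e / 2 / (`|c| + 1)) <= e / 2.
  by rewrite mulrA ler_pdivrMr ?ltr_wpDl // mulrC ler_wpM2l; lra.
lra.
Qed.

Lemma free_sub mu nu : in_free d x0 mu -> in_free d x0 nu -> in_free d x0 (fsub mu nu).
Proof. by rewrite fsubE; exact: free_comb. Qed.

Lemma span_free nu : in_span_delta d x0 nu -> in_free d x0 nu.
Proof.
move=> Hs; split; first by split; [exact: span_linear | exact: span_bounded].
move=> e e0; exists nu; split => //; apply: le_lt_trans e0; apply: dnorm_le => psi _.
by rewrite /fsub subrr normr0.
Qed.

Lemma dnorm_cvg0_pointwise (rho : nat -> functional R M) chi :
  (forall n, lip_linear (rho n)) -> (forall n, lip_bounded (rho n)) ->
  (fun n => dnorm d x0 (rho n)) @ \oo --> (0 : R) -> Lip0 d x0 chi ->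
  (fun n => rho n chi) @ \oo --> (0 : R).
Proof.
move=> Hl Hb Hcv Hchi; have [c c0 Hc] := Lip0_lipschitz_with Hchi.
apply/cvgrPdist_le => e e0; move/cvgrPdist_le: Hcv => /(_ (e / c) (divr_gt0 e0 c0)).
apply: filterS => n; rewrite !sub0r !normrN ger0_norm ?dnorm_ge0 // => Hn.
have := lip_bounded_scale (Hl n) (fun psi Hp => dnorm_ub (Hb n) Hp) Hchi Hc c0.
move/le_trans; apply; rewrite (le_trans (ler_wpM2l (ltW c0) Hn)) //.
by rewrite mulrCA mulfV ?mulr1 // lt0r_neq0.
Qed.

End DualNorm.

Section Iterates.
Context (R : realType) (M : Type) (d : M -> M -> R) (x0 : M) (f : M -> M).
Hypothesis Hm : is_metric d.
Hypothesis Hf : Lip0_map d x0 f.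

Lemma iter_fhat n (mu : functional R M) : iter n (fhat f) mu = fun psi => mu (psi \o iter n f).
Proof. by elim: n => //= n IH; rewrite /fhat IH. Qed.

Lemma iter_x0 n : iter n f x0 = x0.
Proof. by elim: n => //= n ->; case: Hf. Qed.

Lemma iter_lipschitz : exists2 L : R, 1 <= L &
  forall n x y, d (iter n f x) (iter n f y) <= L ^+ n * d x y.
Proof.
case: Hf => _ [L HL]; exists (`|L| + 1); first by rewrite lerDr.
elim => [|n IH] x y /=; first by rewrite expr0 mul1r.
rewrite (le_trans (HL _ _)) // exprS -mulrA.
rewrite (le_trans (y := `|L| * d (iter n f x) (iter n f y))) //.
  by rewrite ler_wpM2r ?(dist_ge0 Hm) // ler_norm.
by rewrite ler_pM ?(dist_ge0 Hm) // lerDl.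
Qed.

Lemma Lip0_iter n psi : Lip0 d x0 psi -> Lip0 d x0 (psi \o iter n f).
Proof.
move=> [p0 [Lp HLp]]; have [L L1 HL] := iter_lipschitz.
split; first by rewrite /= iter_x0.
exists (`|Lp| * L ^+ n) => x y /=.
rewrite (le_trans (HLp _ _)) // (le_trans (y := `|Lp| * d (iter n f x) (iter n f y))) //.
  by rewrite ler_wpM2r ?(dist_ge0 Hm) // ler_norm.
by rewrite -mulrA ler_wpM2l.
Qed.

Lemma Lip0_comp psi : Lip0 d x0 psi -> Lip0 d x0 (psi \o f).
Proof. by move=> Hpsi; exact (Lip0_iter 1 Hpsi). Qed.

Lemma lip_linear_iter n mu : lip_linear d x0 mu -> lip_linear d x0 (iter n (fhat f) mu).
Proof. by move=> H a phi psi Hp Hq; rewrite iter_fhat; apply: H; exact: Lip0_iter. Qed.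

Lemma lip_bounded_iter n mu : lip_linear d x0 mu -> lip_bounded d x0 mu ->
  lip_bounded d x0 (iter n (fhat f) mu).
Proof.
move=> Hl [C HC]; have [L L1 HL] := iter_lipschitz.
exists (L ^+ n * C) => psi Hp; rewrite iter_fhat.
apply: (lip_bounded_scale Hm Hl HC); first by apply: Lip0_iter; case: Hp.
  by move=> x y /=; rewrite (le_trans (Hp.2 _ _)) // HL.
by rewrite exprn_gt0 // (lt_le_trans ltr01).
Qed.

End Iterates.

Lemma limn_einf0_frequently (R : realType) (u : nat -> R) :
  limn_einf (fun n => (u n)%:E) = 0%E ->
  forall e, 0 < e -> forall N, exists n, (N <= n)%N /\ u n < e.
Proof.
move=> H e e0 N; apply: contrapT => Hn.
have Hge n : (N <= n)%N -> e <= u n.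
  by move=> Nn; rewrite leNgt; apply/negP => He; apply: Hn; exists n.
have : (e%:E <= limn_einf (fun n => (u n)%:E))%E.
  rewrite limn_einf_lim; apply: lime_ge; first exact: is_cvg_einfs.
  near=> m; apply: le_ereal_inf_tmp => _ [k /= mk <-]; rewrite lee_fin Hge //.
  by apply: leq_trans mk; near: m; exists N.
by rewrite H lee_fin; lra.
Unshelve. all: by end_near.
Qed.

Lemma bounded_cluster_point (R : realType) N (K : R) (v : nat -> 'I_N -> R) :
  (forall k i, `|v k i| <= K) ->
  exists p : 'I_N -> R, forall eta, 0 < eta -> forall k0, exists k, (k0 <= k)%N /\
     forall i, `|p i - v k i| < eta.
Proof.
move=> Hv; pose rv k := \row_i v k i.
have cube := @rV_compact R N (fun _ => `[-K, K]%classic) (fun _ => @segment_compact R _ _).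
have Fcube : (rv @ \oo) [set w : 'rV[R]_N | forall i, `[-K, K]%classic (w ord0 i)].
  by rewrite /fmap /=; apply: filterE => k i; rewrite /rv mxE in_itv /= -ler_norml.
have [p [_ Hp]] := cube _ _ Fcube.
exists (fun i => p ord0 i) => eta eta0 k0.
have Ftail : (rv @ \oo) [set w | exists k, (k0 <= k)%N /\ w = rv k].
  by rewrite /fmap /=; near=> k; exists k; split => //; near: k; exists k0.
have [w [[k [kk ->]] Hb]] := Hp _ _ Ftail (nbhsx_ballx p eta eta0).
exists k; split => // i; case: Hb => _ /(_ ord0 i).
by rewrite -ball_normE /= /rv mxE.
Unshelve. all: by end_near.
Qed.

Lemma eq_of_close (R : realType) (x y : R) : (forall e, 0 < e -> `|x - y| <= e) -> x = y.
Proof.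
move=> H; apply/eqP; rewrite -subr_eq0 -normr_le0.
by case: (ltrP 0 `|x - y|) => h //; have := H _ (divr_gt0 h (ltr0Sn _ 1)); lra.
Qed.

Lemma finite_separated (R : realType) (L : seq R) p :
  exists2 rho, 0 < rho & forall x, x \in L -> x != p -> rho <= `|x - p|.
Proof.
elim: L => [|y L [r r0 Hr]]; first by exists 1.
case: (eqVneq y p) => [->|yp].
  by exists r => // x; rewrite inE => /orP[/eqP -> /eqP//|]; exact: Hr.
exists (Num.min r `|y - p|); first by rewrite lt_min r0 normr_gt0 subr_eq0.
move=> x; rewrite inE => /orP[/eqP ->|xL xp]; first by rewrite ge_min lexx orbT.
by rewrite ge_min Hr.
Qed.

Definition contraction0 (R : realType) (h : R -> R) :=
  h 0 = 0 /\ forall x y, `|h x - h y| <= `|x - y|.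

(* The tent max(0, rho - |s - p|) of height rho centred at p. *)
Definition tent (R : realType) (p rho s : R) := (rho - `|s - p| + `|rho - `|s - p| |) / 2.

Lemma tent_lipschitz (R : realType) (p rho x y : R) :
  `|tent p rho x - tent p rho y| <= `|x - y|.
Proof.
rewrite /tent.
have h1 := ler_dist_dist (x - p) (y - p).
have h2 := ler_dist_dist (rho - `|x - p|) (rho - `|y - p|).
rewrite (_ : x - p - (y - p) = x - y) in h1; last by ring.
rewrite (_ : rho - `|x - p| - (rho - `|y - p|) = - (`|x - p| - `|y - p|)) in h2; last by ring.
rewrite normrN in h2.
move: h1 h2; set X := `|x - p|; set Y := `|y - p|; set P := `|rho - X|; set Q := `|rho - Y|.
set Z := `|x - y|.
move=> h1 h2; have h3 := h1; move: h1 h2.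
rewrite !ler_norml => /andP[h1 h1'] /andP[h2 h2']; apply/andP; split; lra.
Qed.

Lemma tent_far (R : realType) (p rho s : R) : rho <= `|s - p| -> tent p rho s = 0.
Proof.
by move=> H; rewrite /tent (@ler0_norm _ (rho - `|s - p|)) ?subr_le0 // addrN mul0r.
Qed.

Lemma tent_at (R : realType) (p rho : R) : 0 < rho -> tent p rho p = rho.
Proof. by move=> r0; rewrite /tent subrr normr0 subr0 gtr0_norm //; lra. Qed.

Section Masses.
Context (R : realType) (N : nat) (a : 'I_N -> R).

(* The mass given to the point p by the measure sum_i a_i delta_(u i) on the line. *)
Definition mass (u : 'I_N -> R) p := \sum_(i | u i == p) a i.

(* The finitely many values a mass can take: the subset sums of the a_i. *)
Definition subset_sums := [seq \sum_(i in A) a i | A : {set 'I_N} <- enum {set 'I_N}].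

Lemma mass_subset_sum u p : mass u p \in subset_sums.
Proof.
apply/mapP; exists ([set i | u i == p]%SET); first by rewrite mem_enum.
by apply: eq_bigl => i; rewrite !inE.
Qed.

Lemma mass_gap : exists2 del, 0 < del & forall u u' p,
  mass u p != mass u' p -> del <= `|mass u p - mass u' p|.
Proof.
have [del del0 Hdel] := finite_separated [seq x - y | x <- subset_sums, y <- subset_sums] 0.
exists del => // u u' p Hne; rewrite -[_ - _]subr0; apply: Hdel; last by rewrite subr_eq0.
by apply/allpairsP; exists (mass u p, mass u' p); rewrite !mass_subset_sum.
Qed.

Lemma sum_by_masses (u : 'I_N -> R) (U : seq R) : uniq U -> (forall i, u i \in U) ->
  \sum_i a i * u i = \sum_(p <- U) p * mass u p.
Proof.
move=> Uu Hu.
under [RHS]eq_bigr => p _ do rewrite /mass mulr_sumr big_mkcond /=.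
rewrite exchange_big /=; apply: eq_bigr => i _.
rewrite (bigD1_seq (u i)) //= eqxx big1 ?addr0; first by rewrite mulrC.
by move=> q /negbTE qi; rewrite eq_sym qi.
Qed.

Lemma masses_differ (u u' : 'I_N -> R) : \sum_i a i * u i != \sum_i a i * u' i ->
  exists2 p, p != 0 & mass u p != mass u' p.
Proof.
move=> Hne; apply: contrapT => Hm; move/eqP: Hne; apply.
pose U := undup ([seq u i | i <- enum 'I_N] ++ [seq u' i | i <- enum 'I_N]).
have HU : uniq U by exact: undup_uniq.
have H1 i : u i \in U by rewrite mem_undup mem_cat map_f ?mem_enum.
have H2 i : u' i \in U by rewrite mem_undup mem_cat [X in _ || X]map_f ?mem_enum ?orbT.
rewrite (sum_by_masses HU H1) (sum_by_masses HU H2); apply: eq_bigr => p _.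
case: (eqVneq p 0) => [->|p0]; first by rewrite !mul0r.
by congr (_ * _); apply: contrapT => Hp; apply: Hm; exists p => //; exact/eqP.
Qed.

Lemma tent_mass (L : seq R) p : p != 0 -> exists2 rho, 0 < rho &
  contraction0 (tent p rho) /\ forall u, (forall i, u i \in L) ->
    \sum_i a i * tent p rho (u i) = rho * mass u p.
Proof.
move=> p0; have [rho r0 Hr] := finite_separated (0 :: L) p.
exists rho => //; split.
  split; last exact: tent_lipschitz.
  by apply: tent_far; apply: Hr; rewrite ?inE ?eqxx // eq_sym.
move=> u Hu; rewrite /mass mulr_sumr [RHS]big_mkcond /=; apply: eq_bigr => i _.
case: (eqVneq (u i) p) => [->|up]; first by rewrite tent_at // mulrC.
by rewrite tent_far ?mulr0 // Hr // inE Hu orbT.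
Qed.

Lemma mass_affine (A B : (R -> R) -> R) (u0 u1 u : 'I_N -> R) t1 t : t1 != 0 ->
  (forall h, contraction0 h -> \sum_i a i * h (u0 i) = A h) ->
  (forall h, contraction0 h -> \sum_i a i * h (u1 i) = A h + t1 * B h) ->
  (forall h, contraction0 h -> \sum_i a i * h (u i) = A h + t * B h) ->
  forall p, p != 0 -> mass u p - mass u0 p = t / t1 * (mass u1 p - mass u0 p).
Proof.
move=> t10 H0 H1 H p p0.
pose L := [seq u0 i | i <- enum 'I_N] ++ [seq u1 i | i <- enum 'I_N] ++ [seq u i | i <- enum 'I_N].
have [rho r0 [Hh Hmass]] := tent_mass L p0.
have inL0 i : u0 i \in L by rewrite !mem_cat map_f ?mem_enum.
have inL1 i : u1 i \in L by rewrite !mem_cat map_f ?mem_enum ?orbT.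
have inL i : u i \in L by rewrite !mem_cat map_f ?mem_enum ?orbT.
have E0 := H0 _ Hh; have E1 := H1 _ Hh; have E := H _ Hh.
rewrite Hmass // in E0; rewrite Hmass // in E1; rewrite Hmass // in E.
have e1 : rho * (mass u p - mass u0 p) = t * B (tent p rho) by rewrite mulrBr E E0; ring.
have e2 : rho * (mass u1 p - mass u0 p) = t1 * B (tent p rho) by rewrite mulrBr E1 E0; ring.
apply: (mulfI (x := rho)); first by rewrite gt_eqF.
by rewrite e1 mulrCA e2; field.
Qed.

(* Rigidity: if A + t * B is exactly realised for every t in [0, eps), then
   B vanishes at the identity, since masses would otherwise vary continuously
   in t while only taking finitely many values. *)
Lemma realised_line_rigid (A B : (R -> R) -> R) eps : 0 < eps ->
  (forall t, 0 <= t -> t < eps -> exists u : 'I_N -> R, forall h, contraction0 h ->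
      \sum_i a i * h (u i) = A h + t * B h) ->
  B id = 0.
Proof.
move=> e0 Hreal; apply: contrapT => Bid.
have Hid : contraction0 (@id R) by [].
pose t1 := eps / 2; have t10 : 0 < t1 by rewrite divr_gt0.
have [u0 H0] := Hreal 0 (lexx _) e0.
have [u1 H1] := Hreal t1 (ltW t10) ltac:(rewrite /t1; lra).
have H0' h : contraction0 h -> \sum_i a i * h (u0 i) = A h by move=> Hh; rewrite H0 // mul0r addr0.
have [p p0 Hp] : exists2 p, p != 0 & mass u1 p != mass u0 p.
  apply: masses_differ; rewrite (H1 _ Hid) (H0' _ Hid) -subr_eq0 addrC addKr.
  by rewrite mulf_neq0 ?(gt_eqF t10) //; exact/eqP.
pose beta := mass u1 p - mass u0 p.
have beta0 : 0 < `|beta| by rewrite normr_gt0 subr_eq0.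
have [del del0 Hdel] := mass_gap.
pose s := Num.min 1 (del / (2 * `|beta|)).
have s0 : 0 < s by rewrite lt_min ltr01 divr_gt0 // mulr_gt0.
have st1 : s * t1 < eps.
  by rewrite (le_lt_trans (y := t1)) ?ger_pMl ?ge_min ?lexx //; rewrite /t1; lra.
have [u Hu] := Hreal (s * t1) (ltW (mulr_gt0 s0 t10)) st1.
have Emass := mass_affine (lt0r_neq0 t10) H0' H1 Hu p0.
rewrite mulfK ?(lt0r_neq0 t10) // -/beta in Emass.
have Hne : mass u p != mass u0 p by rewrite -subr_eq0 Emass mulf_neq0 ?(lt0r_neq0 s0) // subr_eq0.
have := Hdel _ _ _ Hne; rewrite Emass normrM gtr0_norm //.
have : s * `|beta| <= del / (2 * `|beta|) * `|beta| by rewrite ler_wpM2r // ge_min lexx orbT.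
have -> : del / (2 * `|beta|) * `|beta| = del / 2 by field; rewrite lt0r_neq0.
lra.
Qed.

Lemma realisation_limit (G : (R -> R) -> R) (K : R) (v : nat -> 'I_N -> R) :
  (forall k i, `|v k i| <= K) ->
  (forall k h, contraction0 h -> `|\sum_i a i * h (v k i) - G h| <= k.+1%:R^-1) ->
  exists u : 'I_N -> R, forall h, contraction0 h -> \sum_i a i * h (u i) = G h.
Proof.
move=> Hv Happrox; have [u Hu] := bounded_cluster_point Hv.
exists u => h Hh; apply: eq_of_close => e e0.
pose SA := \sum_i `|a i|.
have SA0 : 0 <= SA by rewrite sumr_ge0.
pose eta := e / 2 / (SA + 1).
have eta0 : 0 < eta by rewrite !divr_gt0 // ltr_wpDl.
have [k0 Hk0] := @ltr_add_invr R 0 (e / 2) ltac:(lra).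
have [k [kk Hk]] := Hu eta eta0 k0.
have Hclose : `|\sum_i a i * h (u i) - \sum_i a i * h (v k i)| <= e / 2.
  rewrite -sumrB (le_trans (ler_norm_sum _ _ _)) //.
  apply: (le_trans (y := \sum_i `|a i| * eta)).
    apply: ler_sum => i _; rewrite -mulrBr normrM ler_wpM2l //.
    by rewrite (le_trans (Hh.2 _ _)) // ltW.
  by rewrite -mulr_suml /eta -/SA mulrA ler_pdivrMr ?ltr_wpDl //; lra.
have Herr : k.+1%:R^-1 <= k0.+1%:R^-1 :> R.
  by rewrite lef_pV2 ?posrE ?ltr0Sn // ler_nat ltnS.
have := Happrox k h Hh; move: Hclose Herr Hk0; rewrite add0r.
set X := \sum_i _ * h (u i); set Y := \sum_i _ * h (v k i).
set ek := k.+1%:R^-1; set ek0 := k0.+1%:R^-1.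
move=> H1 H2 H3 H4; rewrite (_ : X - G h = (X - Y) + (Y - G h)); last by ring.
by rewrite (le_trans (ler_normD _ _)) //; lra.
Qed.

End Masses.

(* Truncation at height K: clamp K s = max(-K, min(K, s)). *)
Definition clamp (R : realType) (K s : R) := (`|s + K| - `|s - K|) / 2.

Lemma clamp_contraction0 (R : realType) (K : R) : 0 < K -> contraction0 (clamp K).
Proof.
move=> K0; split; first by rewrite /clamp add0r sub0r normrN subrr mul0r.
move=> x y; rewrite /clamp.
have h1 := ler_dist_dist (x + K) (y + K).
have h2 := ler_dist_dist (x - K) (y - K).
rewrite (_ : x + K - (y + K) = x - y) in h1; last by ring.
rewrite (_ : x - K - (y - K) = x - y) in h2; last by ring.
move: h1 h2; set P := `|x + K|; set Q := `|y + K|; set P' := `|x - K|; set Q' := `|y - K|.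
set Z := `|x - y|.
by rewrite !ler_norml => /andP[? ?] /andP[? ?]; apply/andP; split; lra.
Qed.

Lemma clamp_id (R : realType) (K s : R) : `|s| <= K -> clamp K s = s.
Proof.
rewrite ler_norml => /andP[h1 h2]; rewrite /clamp ger0_norm; last by lra.
by rewrite ler0_norm; lra.
Qed.

Lemma clamp_bounded (R : realType) (K s : R) : 0 < K -> `|clamp K s| <= K.
Proof.
move=> K0; rewrite /clamp.
have := ler_dist_dist (s + K) (s - K).
rewrite (_ : s + K - (s - K) = 2 * K); last by ring.
rewrite normrM (gtr0_norm K0) (@gtr0_norm _ 2) //.
set P := `|s + K|; set Q := `|s - K|.
by rewrite !ler_norml => /andP[? ?]; apply/andP; split; lra.
Qed.

Lemma sum_clamp (R : realType) (T : Type) (g : T -> R) (s : seq (R * T)) K :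
  \sum_(q <- s) `|g q.2| <= K ->
  \sum_(q <- s) q.1 * clamp K (g q.2) = \sum_(q <- s) q.1 * g q.2.
Proof.
elim: s => [|q s IH]; first by rewrite !big_nil.
rewrite !big_cons => H.
have H0 : 0 <= \sum_(q <- s) `|g q.2| by rewrite sumr_ge0.
rewrite clamp_id ?IH //; first by rewrite (le_trans _ H) // lerDr.
by rewrite (le_trans _ H) // lerDl.
Qed.

Section Truncation.
Context (R : realType) (M : Type) (d : M -> M -> R) (x0 : M).

Lemma lip_ball_comp (phi : M -> R) h : lip_ball d x0 phi -> contraction0 h ->
  lip_ball d x0 (fun x => h (phi x)).
Proof.
move=> [[p0 _] Hp] [h0 Hh]; split; first split.
- by rewrite p0 h0.
- by exists 1 => x y; rewrite mul1r (le_trans (Hh _ _)).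
- by move=> x y; rewrite (le_trans (Hh _ _)).
Qed.

(* A molecule only sees finitely many values of phi, so it cannot tell phi
   from a high enough truncation of phi. *)
Lemma span_truncate nu phi : in_span_delta d x0 nu -> lip_ball d x0 phi ->
  exists2 K, 0 < K & nu (fun x => clamp K (phi x)) = nu phi.
Proof.
move=> [s Hs] Hphi; pose K := 1 + \sum_(q <- s) `|phi q.2|.
have S0 : 0 <= \sum_(q <- s) `|phi q.2| by rewrite sumr_ge0.
exists K; first by rewrite ltr_wpDr.
have HK : \sum_(q <- s) `|phi q.2| <= K by rewrite lerDr.
rewrite !Hs; [|by case: Hphi|by case: (lip_ball_comp Hphi (clamp_contraction0 (ltr_wpDr S0 ltr01)))].
exact: sum_clamp.
Qed.

End Truncation.

Section VanishingOrbits.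
Context (R : realType) (M : Type) (d : M -> M -> R) (x0 : M) (f : M -> M).
Hypothesis Hm : is_metric d.
Hypothesis Hf : Lip0_map d x0 f.

Definition orbit_vanishes (w : functional R M) :=
  (fun n => dnorm d x0 (iter n (fhat f) w)) @ \oo --> (0 : R).

Lemma orbit_vanishes_eventually w e : in_free d x0 w -> orbit_vanishes w -> 0 < e ->
  exists N, forall n, (N <= n)%N ->
    forall psi, lip_ball d x0 psi -> `|w (psi \o iter n f)| <= e.
Proof.
move=> [[lw bw] _] Hw e0; move/cvgrPdist_le: Hw => /(_ e e0) [N _ HN].
exists N => n Nn psi Hp; have bn := lip_bounded_iter Hm Hf n lw bw.
have := HN n Nn; rewrite /= sub0r normrN ger0_norm ?(dnorm_ge0 Hm bn) //.
by apply: le_trans; have := dnorm_ub bn Hp; rewrite iter_fhat.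
Qed.

Variables (mu0 : functional R M) (r : R).
Hypothesis Hmu0 : in_free d x0 mu0.
Hypothesis r0 : 0 < r.
Hypothesis Hball : forall nu, in_free d x0 nu -> dnorm d x0 (fsub nu mu0) < r ->
  return_set d x0 (fhat f) nu.

Lemma perturbed_recurrent gam w t : in_span_delta d x0 gam ->
  dnorm d x0 (fsub mu0 gam) < r / 2 -> in_free d x0 w -> 0 <= t ->
  t * dnorm d x0 w < r / 2 -> return_set d x0 (fhat f) (fun psi => gam psi + t * w psi).
Proof.
move=> Hgam Hclose Hw t0 Ht.
apply: Hball; first exact: free_comb (span_free Hm Hgam) Hw.
have [[[l0 b0] _] [[lw bw] _]] := (Hmu0, Hw).
have bg : lip_bounded d x0 (fsub mu0 gam).
  by apply: lip_bounded_sub => //; exact: span_bounded.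
apply: (le_lt_trans (y := dnorm d x0 (fsub mu0 gam) + t * dnorm d x0 w)); last by lra.
apply: (dnorm_le Hm) => psi Hp; rewrite /fsub.
rewrite (_ : _ - _ = - (mu0 psi - gam psi) + t * w psi); last by ring.
rewrite (le_trans (ler_normD _ _)) // normrN lerD // ?(dnorm_ub bg Hp) //.
by rewrite normrM ger0_norm // ler_wpM2l // dnorm_ub.
Qed.

Lemma orbit_returns gam w t : in_free d x0 w -> orbit_vanishes w -> 0 <= t ->
  return_set d x0 (fhat f) (fun psi => gam psi + t * w psi) ->
  forall e, 0 < e -> exists n, forall psi, lip_ball d x0 psi ->
    `|gam (psi \o iter n f) - (gam psi + t * w psi)| <= e.
Proof.
move=> Hw Hvan t0 [[[lr br] _] Hret] e e0.
have e2 : 0 < e / 2 by rewrite divr_gt0.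
have t1 : 0 < t + 1 by rewrite ltr_wpDl.
have [N HN] := orbit_vanishes_eventually Hw Hvan (divr_gt0 e2 t1).
have [n [Nn Hn]] := limn_einf0_frequently Hret e2 N.
exists n => psi Hp.
have bn : lip_bounded d x0 (fsub (iter n (fhat f) (fun psi => gam psi + t * w psi))
                                 (fun psi => gam psi + t * w psi)).
  by apply: lip_bounded_sub => //; exact: lip_bounded_iter.
have Hrec := le_lt_trans (dnorm_ub bn Hp) Hn; rewrite /fsub iter_fhat /= in Hrec.
have Hsmall : t * `|w (psi \o iter n f)| <= e / 2.
  rewrite (le_trans (ler_wpM2l t0 (HN n Nn psi Hp))) // mulrA ler_pdivrMr //.
  by rewrite mulrC mulrDr mulr1 lerDl ltW.
set W := w (psi \o iter n f); set G := gam (psi \o iter n f).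
rewrite (_ : G - _ = (G + t * W - (gam psi + t * w psi)) - t * W); last by ring.
by rewrite (le_trans (ler_normB _ _)) // normrM ger0_norm //; lra.
Qed.

(* Rigidity for test functions of bounded range: recurrence along the segment
   gam + t w, t in [0, eps), gives exact realisations of
   h |-> gam (h o Phi) + t w (h o Phi) by finite measures on the line, so
   w Phi = 0 by the mass rigidity lemma. *)
Lemma vanishes_on_bounded_range w Phi K : in_free d x0 w -> orbit_vanishes w ->
  lip_ball d x0 Phi -> (forall x, `|Phi x| <= K) -> w Phi = 0.
Proof.
move=> Hw Hvan HPhi HK.
have [gam [Hgam Hclose]] := Hmu0.2 _ (divr_gt0 r0 (ltr0Sn _ 1)).
have [N [a [xs Hsum]]] := span_ord Hgam.
have dw0 : 0 <= dnorm d x0 w by have [[_ bw] _] := Hw; exact: (dnorm_ge0 Hm (rho := w)).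
pose eps := r / 2 / (dnorm d x0 w + 1).
have eps0 : 0 < eps by rewrite !divr_gt0 // ltr_wpDl.
apply: (realised_line_rigid (a := a) (A := fun h => gam (fun x => h (Phi x)))
  (B := fun h => w (fun x => h (Phi x))) eps0).
move=> t t0 teps.
have Hsmall : t * dnorm d x0 w < r / 2.
  rewrite (le_lt_trans (y := t * (dnorm d x0 w + 1))) ?ler_wpM2l ?lerDl //.
  by rewrite -ltr_pdivlMr ?ltr_wpDl.
have Hret := perturbed_recurrent Hgam Hclose Hw t0 Hsmall.
have Hk k : exists n, forall psi, lip_ball d x0 psi ->
    `|gam (psi \o iter n f) - (gam psi + t * w psi)| <= k.+1%:R^-1.
  by apply: (orbit_returns Hw Hvan t0 Hret); rewrite invr_gt0 ltr0Sn.
have [nk Hnk] := choice Hk.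
apply: (realisation_limit (v := fun k i => Phi (iter (nk k) f (xs i))) (fun k i => HK _)).
move=> k h Hh.
have Hpsi := lip_ball_comp HPhi Hh.
have := Hnk k _ Hpsi; rewrite Hsum //.
by apply: Lip0_iter => //; case: Hpsi.
Qed.

Lemma orbit_vanishes_eq0 w : in_free d x0 w -> orbit_vanishes w ->
  forall psi, Lip0 d x0 psi -> w psi = 0.
Proof.
move=> Hw Hvan; have [[lw bw] Happrox] := Hw.
apply: (lip_linear_ball_eq0 Hm lw) => phi Hphi; apply: eq_of_close => e e0; rewrite subr0.
have [w' [Hw' Hd]] := Happrox _ (divr_gt0 e0 (ltr0Sn _ 1)).
have [K K0 HK] := span_truncate Hw' Hphi.
have HPhi := lip_ball_comp Hphi (clamp_contraction0 K0).
have Hz := vanishes_on_bounded_range Hw Hvan HPhi (fun x => clamp_bounded (phi x) K0).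
have bb : lip_bounded d x0 (fsub w w') by apply: lip_bounded_sub => //; exact: span_bounded.
have h1 := dnorm_ub bb Hphi; have h2 := dnorm_ub bb HPhi.
rewrite /fsub HK Hz sub0r normrN in h2.
have : `|w phi| <= `|w phi - w' phi| + `|w' phi| by rewrite (le_trans _ (ler_normD _ _)) // subrK.
move: Hd h1 h2; rewrite /fsub; set D := dnorm _ _ _; lra.
Qed.

End VanishingOrbits.

Section OrbitLimits.
Context (R : realType) (M : Type) (d : M -> M -> R) (x0 : M) (f : M -> M).
Hypothesis Hm : is_metric d.
Hypothesis Hf : Lip0_map d x0 f.

Lemma orbit_limit_fixed mu nu : in_free d x0 mu -> in_span_delta d x0 nu ->
  (fun n => dnorm d x0 (fsub (iter n (fhat f) mu) nu)) @ \oo --> (0 : R) ->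
  forall n psi, Lip0 d x0 psi -> nu (psi \o iter n f) = nu psi.
Proof.
move=> [[lmu bmu] _] Hnu Hcv.
pose rh n := fsub (iter n (fhat f) mu) nu.
have Hpt chi : Lip0 d x0 chi -> (fun n => rh n chi) @ \oo --> (0 : R).
  apply: (dnorm_cvg0_pointwise Hm _ _ Hcv) => n.
    by apply: lip_linear_sub; [exact: lip_linear_iter | exact: span_linear].
  by apply: lip_bounded_sub; [exact: lip_bounded_iter | exact: span_bounded].
have Hfix psi : Lip0 d x0 psi -> nu (psi \o f) = nu psi.
  move=> Hpsi; have Hpsif := Lip0_comp Hm Hf Hpsi.
  have : (fun n => rh n.+1 psi - rh n (psi \o f)) @ \oo --> (0 : R) - 0.
    by apply: cvgB; [rewrite (cvg_shiftS (fun n => rh n psi)) |]; exact: Hpt.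
  have -> : (fun n => rh n.+1 psi - rh n (psi \o f)) = fun=> nu (psi \o f) - nu psi.
    by apply: funext => n; rewrite /rh /fsub !iter_fhat; ring.
  by rewrite subr0 => /(norm_cvg_unique (cvg_cst _)) /eqP; rewrite subr_eq0 => /eqP.
elim=> [//|n IH] psi Hpsi.
by rewrite -[psi \o iter n.+1 f]/((psi \o f) \o iter n f) IH ?Hfix //; exact: Lip0_comp.
Qed.

(* Against a T-fixed nu, the orbit of mu - nu is the orbit of mu minus nu. *)
Lemma orbit_vanishes_sub_limit mu nu : in_free d x0 mu -> in_span_delta d x0 nu ->
  (fun n => dnorm d x0 (fsub (iter n (fhat f) mu) nu)) @ \oo --> (0 : R) ->
  orbit_vanishes d x0 f (fsub mu nu).
Proof.
move=> Hmu Hnu Hcv; have Hfixed := orbit_limit_fixed Hmu Hnu Hcv.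
rewrite /orbit_vanishes.
have -> : (fun n => dnorm d x0 (iter n (fhat f) (fsub mu nu))) =
          (fun n => dnorm d x0 (fsub (iter n (fhat f) mu) nu)).
  apply: funext => n; apply: dnorm_ext => psi [Hpsi _].
  by rewrite !iter_fhat /fsub Hfixed.
exact: Hcv.
Qed.

Lemma orbit_vanishes_kernel w : (forall phi, Lip0 d x0 phi -> fhat f w phi = 0) ->
  orbit_vanishes d x0 f w.
Proof.
move=> Hker; apply/cvgrPdist_le => e e0; exists 1%N => // -[//|n] _.
have Hz psi : lip_ball d x0 psi -> iter n.+1 (fhat f) w psi = 0.
  move=> [Hpsi _]; rewrite iter_fhat.
  have -> : psi \o iter n.+1 f = (psi \o iter n f) \o f.
    by apply: funext => x; rewrite /comp iterSr.
  exact: Hker (Lip0_iter Hm Hf n Hpsi).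
have -> : dnorm d x0 (iter n.+1 (fhat f) w) = 0.
  apply/eqP; rewrite eq_le (dnorm_le Hm) => [|psi Hp]; last by rewrite Hz // normr0.
  by rewrite (dnorm_ge0 Hm) //; exists 0 => psi Hp; rewrite Hz // normr0.
by rewrite subrr normr0 ltW.
Qed.

End OrbitLimits.

Unset Implicit Arguments.

Theorem proposition3p15 (R : realType) (M : Type) (d : M -> M -> R) (x0 : M)
    (f : M -> M) :
  is_metric d -> complete_metric d ->
  Lip0_map d x0 f ->
  nonempty_interior d x0 (return_set d x0 (fhat f)) ->
  (~ exists mu : functional R M,
       [/\ in_free d x0 mu, ~ in_span_delta d x0 mu &
           exists nu, in_span_delta d x0 nu /\
             (fun n => dnorm d x0 (fsub (iter n (fhat f) mu) nu)) @ \oo --> (0 : R)])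
  /\
  (forall mu nu : functional R M, in_free d x0 mu -> in_free d x0 nu ->
     (forall phi, Lip0 d x0 phi -> fhat f mu phi = fhat f nu phi) ->
     forall phi, Lip0 d x0 phi -> mu phi = nu phi).
Proof.
move=> Hm _ Hf [mu0 [Hmu0 [r [r0 Hball]]]].
have rigid := orbit_vanishes_eq0 Hm Hf Hmu0 r0 Hball.
have eq_of_sub0 (mu nu : functional R M) phi : fsub mu nu phi = 0 -> mu phi = nu phi.
  by move/eqP; rewrite subr_eq0 => /eqP.
split.
- move=> [mu [Hmu Hns [nu [Hnu Hcv]]]]; apply: Hns.
  have Hw := free_sub Hm Hmu (span_free Hm Hnu).
  have Hzero := rigid _ Hw (orbit_vanishes_sub_limit Hm Hf Hmu Hnu Hcv).
  have [s Hs] := Hnu; exists s => psi Hpsi.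
  by rewrite -Hs //; apply: eq_of_sub0; exact: Hzero.
- move=> mu nu Hmu Hnu Heq phi Hphi; apply: eq_of_sub0.
  apply: rigid Hphi; first exact: free_sub.
  apply: (orbit_vanishes_kernel Hm Hf) => psi Hpsi.
  by rewrite /fhat /fsub -!/(fhat f _ psi) Heq // subrr.
Qed.
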